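(* Let $\epsilon\in(0,1)$, $u_0\in\mathbb{R}$, $h>0$, and let $(u_n)_{n\ge0}$ be a sequence of real numbers starting at $u_0$ and satisfying the implicit midpoint scheme $$\frac{u_n-u_{n-1}}{h}+\frac{1}{\epsilon^2}f\!\left(\frac{u_n+u_{n-1}}{2}\right)=0,\qquad n\ge1,\quad f(u)=u^3-u.$$ (i) If $u_0\in\{0,1,-1\}$ and $h\le2\epsilon^2$, then $u_n=\mathrm{sign}(u_0)$ for all $n\ge1$. (ii) If $u_0\notin\{0,1,-1\}$, define $h^*=h^*(u_0,\epsilon)=\frac{8\epsilon^2}{u_0^2+4|u_0|+3}$ if $|u_0|>1$ and $h^*=\epsilon^2$ if $0<|u_0|<1$. Then $h^*>0$ and for every $h\in(0,h^*]$ the sequence $(u_n)$ is monotone and converges to $\mathrm{sign}(u_0)$ as $n\to\infty$.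
   Context: The scheme discretizes the ODE $u'(t)+\frac{1}{\epsilon^2}(u^3-u)=0$, $u(0)=u_0$. For $h\le2\epsilon^2$ each step equation has a unique real solution. Here $\mathrm{sign}(0)=0$. *)

From Stdlib Require Import Reals Lra.
Open Scope R_scope.

Definition fAC (u : R) : R := u ^ 3 - u.

Definition sgn (x : R) : R :=
  if Rlt_dec 0 x then 1 else if Rlt_dec x 0 then -1 else 0.

Definition midpoint_step (eps h a b : R) : Prop :=
  (b - a) / h + / (eps ^ 2) * fAC ((b + a) / 2) = 0.

(* the threshold h^*(u0, eps) (only meaningful for u0 not in {0,1,-1}) *)
Definition hstar (u0 eps : R) : R :=
  if Rlt_dec 1 (Rabs u0) then 8 * eps ^ 2 / (u0 ^ 2 + 4 * Rabs u0 + 3)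
  else eps ^ 2.

Definition monotone_seq (u : nat -> R) : Prop :=
  (forall n, u n <= u (S n)) \/ (forall n, u (S n) <= u n).

From Stdlib Require Import Reals Lra Psatz.
Open Scope R_scope.

(* Write k = h / eps^2 and m = (a + b) / 2 for the midpoint of a step a -> b.
   The scheme reads mid_fun k m = 2 a, where mid_fun k m = 2 m + k (m^3 - m) is
   strictly increasing for k <= 2.  Hence the equilibria 0, 1, -1 are reproduced
   exactly, and comparing mid_fun k with 2 a at m = a and at m = (a + 1) / 2 traps
   b between a and 1 as long as k (a + 1) (a + 3) <= 8; this is where h* comes
   from.  The distances to 1 then satisfy
     (1 - a) - (1 - b) = k m (m + 1) / 2 * ((1 - a) + (1 - b)),
   with a coefficient bounded below along the orbit, so they decay geometrically.
   Negative u0 reduce to positive ones through the symmetry u -> -u. *)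

Definition mid_fun (k m : R) : R := 2 * m + k * fAC m.

Lemma mid_fun_lt k x y : 0 < k <= 2 -> x < y -> mid_fun k x < mid_fun k y.
Proof.
  intros Hk Hxy.
  assert (Hfactor : mid_fun k y - mid_fun k x
                    = (y - x) * (2 - k + k * (x ^ 2 + x * y + y ^ 2)))
    by (unfold mid_fun, fAC; ring).
  assert (Hquad : 0 < x ^ 2 + x * y + y ^ 2)
    by (pose proof (pow2_ge_0 (x + y)); assert (0 < (y - x) ^ 2) by (apply pow_lt; lra); nra).
  assert (0 < 2 - k + k * (x ^ 2 + x * y + y ^ 2)) by nra.
  nra.
Qed.

Lemma mid_fun_le_inv k x y : 0 < k <= 2 -> mid_fun k x <= mid_fun k y -> x <= y.
Proof.
  intros Hk Hle. destruct (Rle_or_lt x y) as [|Hyx]; [assumption|].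
  pose proof (mid_fun_lt k y x Hk Hyx). lra.
Qed.

Lemma mid_fun_inj k x y : 0 < k <= 2 -> mid_fun k x = mid_fun k y -> x = y.
Proof.
  intros Hk Heq.
  apply Rle_antisym; apply (mid_fun_le_inv k); lra.
Qed.

Lemma mid_fun_at_half_sum k a :
  mid_fun k ((a + 1) / 2) - 2 * a = (1 - a) * (1 - k * (a + 1) * (a + 3) / 8).
Proof. unfold mid_fun, fAC. field. Qed.

Lemma step_toward_one k a b : mid_fun k ((a + b) / 2) = 2 * a ->
  (1 - a) - (1 - b) = k * ((a + b) / 2) * ((a + b) / 2 + 1) / 2 * ((1 - a) + (1 - b)).
Proof.
  intros Hmid.
  assert (Hdiff : (1 - a) - (1 - b) - k * ((a + b) / 2) * ((a + b) / 2 + 1) / 2 * ((1 - a) + (1 - b))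
              = mid_fun k ((a + b) / 2) - 2 * a) by (unfold mid_fun, fAC; field).
  lra.
Qed.

Lemma step_below_one k a b : 0 < k <= 1 -> 0 <= a <= 1 ->
  mid_fun k ((a + b) / 2) = 2 * a -> a <= b <= 1.
Proof.
  intros Hk Ha Hmid.
  assert (Hlo : mid_fun k a <= mid_fun k ((a + b) / 2)).
  { assert (a * (a - 1) * (a + 1) <= 0) by nra.
    rewrite Hmid. unfold mid_fun, fAC. nra. }
  assert (Hhi : mid_fun k ((a + b) / 2) <= mid_fun k ((a + 1) / 2)).
  { pose proof (mid_fun_at_half_sum k a).
    assert (0 <= 1 - k * (a + 1) * (a + 3) / 8) by nra.
    assert (0 <= (1 - a) * (1 - k * (a + 1) * (a + 3) / 8)) by nra.
    lra. }
  apply mid_fun_le_inv in Hlo, Hhi; lra.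
Qed.

Lemma step_above_one k a b : 0 < k -> 1 <= a -> k * (a + 1) * (a + 3) <= 8 ->
  mid_fun k ((a + b) / 2) = 2 * a -> 1 <= b <= a.
Proof.
  intros Hk Ha Hk8 Hmid.
  assert (Hk1 : 0 < k <= 2) by nra.
  assert (Hhi : mid_fun k ((a + b) / 2) <= mid_fun k a).
  { assert (0 <= a * (a - 1) * (a + 1)) by nra.
    rewrite Hmid. unfold mid_fun, fAC. nra. }
  assert (Hlo : mid_fun k ((a + 1) / 2) <= mid_fun k ((a + b) / 2)).
  { pose proof (mid_fun_at_half_sum k a).
    assert (0 <= 1 - k * (a + 1) * (a + 3) / 8) by lra.
    assert ((1 - a) * (1 - k * (a + 1) * (a + 3) / 8) <= 0) by nra.
    lra. }
  apply mid_fun_le_inv in Hlo, Hhi; lra.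
Qed.

Definition contraction (c : R) : R := (1 - c) / (1 + c).

Lemma contraction_bounds c : 0 < c <= 1 -> 0 <= contraction c < 1.
Proof.
  intros Hc. unfold contraction. split.
  - apply Rmult_le_pos; [lra|]. left. apply Rinv_0_lt_compat. lra.
  - apply (Rmult_lt_reg_r (1 + c)); [lra|].
    replace ((1 - c) / (1 + c) * (1 + c)) with (1 - c) by (field; lra). lra.
Qed.

Lemma le_contraction x y r c : 0 <= x -> 0 <= y -> 0 <= c <= r ->
  x - y = r * (x + y) -> y <= contraction c * x.
Proof.
  intros Hx Hy Hc Hxy. unfold contraction.
  apply (Rmult_le_reg_l (1 + c)); [lra|].
  replace ((1 + c) * ((1 - c) / (1 + c) * x)) with ((1 - c) * x) by (field; lra).
  nra.
Qed.

Lemma geometric_cv (u : nat -> R) l q : 0 <= q < 1 ->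
  (forall n, Rabs (u (S n) - l) <= q * Rabs (u n - l)) -> Un_cv u l.
Proof.
  intros Hq Hcontr.
  set (C := Rabs (u 0%nat - l)).
  assert (Hbound : forall n, Rabs (u n - l) <= q ^ n * C).
  { induction n as [|n IH]; simpl; [unfold C; lra|].
    apply (Rle_trans _ (q * Rabs (u n - l))); [apply Hcontr|].
    rewrite Rmult_assoc. apply Rmult_le_compat_l; lra. }
  intros e He.
  assert (HC : 0 < C + 1) by (pose proof (Rabs_pos (u 0%nat - l)); unfold C; lra).
  destruct (pow_lt_1_zero q ltac:(rewrite Rabs_pos_eq; lra) (e / (C + 1))
              ltac:(apply Rdiv_lt_0_compat; lra)) as [N HN].
  exists N. intros n Hn. unfold R_dist.
  specialize (HN n Hn). rewrite Rabs_pos_eq in HN by (apply pow_le; lra).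
  assert (Hqn : q ^ n * (C + 1) < e).
  { apply (Rmult_lt_compat_r (C + 1)) in HN; [|lra].
    replace (e / (C + 1) * (C + 1)) with e in HN by (field; lra). exact HN. }
  pose proof (Hbound n). pose proof (pow_le q n (proj1 Hq)). nra.
Qed.

Lemma midpoint_step_opp eps h a b :
  midpoint_step eps h a b -> midpoint_step eps h (- a) (- b).
Proof.
  unfold midpoint_step, fAC. intros Hstep.
  replace ((- b - - a) / h + / eps ^ 2 * (((- b + - a) / 2) ^ 3 - (- b + - a) / 2))
    with (- ((b - a) / h + / eps ^ 2 * (((b + a) / 2) ^ 3 - (b + a) / 2)))
    by (unfold Rdiv; ring).
  rewrite Hstep. ring.
Qed.

Lemma hstar_opp u0 eps : hstar (- u0) eps = hstar u0 eps.
Proof.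
  unfold hstar. rewrite Rabs_Ropp.
  replace ((- u0) ^ 2) with (u0 ^ 2) by ring. reflexivity.
Qed.

Lemma hstar_pos u0 eps : 0 < eps -> 0 < hstar u0 eps.
Proof.
  intros Heps. unfold hstar.
  destruct (Rlt_dec 1 (Rabs u0)); [|apply pow_lt; lra].
  apply Rdiv_lt_0_compat; [apply Rmult_lt_0_compat; [lra|apply pow_lt; lra]|].
  pose proof (Rabs_pos u0). nra.
Qed.

Lemma sgn_pos x : 0 < x -> sgn x = 1.
Proof. intros Hx. unfold sgn. destruct (Rlt_dec 0 x); lra. Qed.

Lemma sgn_opp x : sgn (- x) = - sgn x.
Proof.
  unfold sgn.
  destruct (Rlt_dec 0 x), (Rlt_dec x 0), (Rlt_dec 0 (- x)), (Rlt_dec (- x) 0); lra.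
Qed.

Lemma sgn_equilibrium c : c = 0 \/ c = 1 \/ c = -1 -> sgn c = c.
Proof.
  unfold sgn. intros Hc.
  destruct (Rlt_dec 0 c), (Rlt_dec c 0); lra.
Qed.

Lemma fAC_equilibrium c : c = 0 \/ c = 1 \/ c = -1 -> fAC c = 0.
Proof. unfold fAC. intros [->|[->| ->]]; ring. Qed.

Lemma monotone_seq_opp (u : nat -> R) : monotone_seq (fun n => - u n) -> monotone_seq u.
Proof.
  intros [Hincr|Hdecr]; [right|left]; intros n;
    [specialize (Hincr n) | specialize (Hdecr n)]; lra.
Qed.

Lemma Un_cv_opp (u : nat -> R) l : Un_cv (fun n => - u n) l -> Un_cv u (- l).
Proof.
  intros Hcv e He. destruct (Hcv e He) as [N HN].
  exists N. intros n Hn. specialize (HN n Hn). unfold R_dist in *.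
  replace (u n - - l) with (- (- u n - l)) by ring.
  rewrite Rabs_Ropp. exact HN.
Qed.

Section MidpointScheme.

Variables eps h : R.
Hypothesis eps_pos : 0 < eps.
Hypothesis h_pos : 0 < h.

Lemma step_ratio_pos : 0 < h / eps ^ 2.
Proof. apply Rdiv_lt_0_compat; [lra|apply pow_lt; lra]. Qed.

Lemma step_ratio_le C : h <= C * eps ^ 2 -> h / eps ^ 2 <= C.
Proof.
  intros Hh. apply (Rmult_le_reg_r (eps ^ 2)); [apply pow_lt; lra|].
  replace (h / eps ^ 2 * eps ^ 2) with h by (field; lra). exact Hh.
Qed.

Lemma midpoint_step_mid_fun a b :
  midpoint_step eps h a b -> mid_fun (h / eps ^ 2) ((a + b) / 2) = 2 * a.
Proof.
  unfold midpoint_step. intros Hstep.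
  replace (mid_fun (h / eps ^ 2) ((a + b) / 2))
    with (2 * a + h * ((b - a) / h + / eps ^ 2 * fAC ((b + a) / 2)))
    by (unfold mid_fun, fAC; field; lra).
  rewrite Hstep. ring.
Qed.

Lemma midpoint_seq_equilibrium (u : nat -> R) : fAC (u 0%nat) = 0 ->
  h <= 2 * eps ^ 2 -> (forall n, midpoint_step eps h (u n) (u (S n))) ->
  forall n, u n = u 0%nat.
Proof.
  intros Hfix Hh Hstep.
  assert (Hk : 0 < h / eps ^ 2 <= 2) by (split; [apply step_ratio_pos|apply step_ratio_le, Hh]).
  induction n as [|n IH]; [reflexivity|].
  pose proof (midpoint_step_mid_fun _ _ (Hstep n)) as Hmid.
  assert (Hrest : mid_fun (h / eps ^ 2) (u 0%nat) = 2 * u 0%nat)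
    by (unfold mid_fun; rewrite Hfix; ring).
  rewrite IH, <- Hrest in Hmid.
  apply mid_fun_inj in Hmid; [lra|exact Hk].
Qed.

Lemma midpoint_cv_below_one (u : nat -> R) : 0 < u 0%nat < 1 -> h <= eps ^ 2 ->
  (forall n, midpoint_step eps h (u n) (u (S n))) ->
  (forall n, u n <= u (S n)) /\ Un_cv u 1.
Proof.
  intros Hu0 Hh Hstep.
  set (k := h / eps ^ 2).
  assert (Hk : 0 < k <= 1)
    by (split; [apply step_ratio_pos|apply step_ratio_le; lra]).
  assert (Hmid : forall n, mid_fun k ((u n + u (S n)) / 2) = 2 * u n)
    by (intros n; apply midpoint_step_mid_fun, Hstep).
  assert (Hinv : forall n, u 0%nat <= u n <= 1).
  { induction n as [|n IH]; [lra|].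
    pose proof (step_below_one k (u n) (u (S n)) Hk ltac:(lra) (Hmid n)). lra. }
  assert (Hincr : forall n, u n <= u (S n) <= 1)
    by (intros n; apply (step_below_one k); [exact Hk|pose proof (Hinv n); lra|apply Hmid]).
  split; [intros n; apply Hincr|].
  set (c := k * u 0%nat * (u 0%nat + 1) / 2).
  apply (geometric_cv u 1 (contraction c)).
  { apply contraction_bounds. unfold c. split; nra. }
  intros n. destruct (Hinv n), (Hincr n).
  rewrite !(Rabs_minus_sym _ 1), !Rabs_pos_eq by lra.
  pose proof (step_toward_one _ _ _ (Hmid n)) as Htoward.
  set (m := (u n + u (S n)) / 2) in Htoward.
  apply (le_contraction _ _ (k * m * (m + 1) / 2) c); [lra|lra| |exact Htoward].
  assert (u 0%nat * (u 0%nat + 1) <= m * (m + 1)) by (unfold m; nra).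
  unfold c. split; nra.
Qed.

Lemma midpoint_cv_above_one (u : nat -> R) : 1 < u 0%nat ->
  h <= 8 * eps ^ 2 / ((u 0%nat + 1) * (u 0%nat + 3)) ->
  (forall n, midpoint_step eps h (u n) (u (S n))) ->
  (forall n, u (S n) <= u n) /\ Un_cv u 1.
Proof.
  intros Hu0 Hh Hstep.
  set (k := h / eps ^ 2).
  assert (Hk0 : 0 < k) by apply step_ratio_pos.
  assert (Hk8 : k * ((u 0%nat + 1) * (u 0%nat + 3)) <= 8).
  { assert (HD : 0 < (u 0%nat + 1) * (u 0%nat + 3)) by nra.
    assert (Hk : k <= 8 / ((u 0%nat + 1) * (u 0%nat + 3))).
    { apply step_ratio_le.
      replace (8 / ((u 0%nat + 1) * (u 0%nat + 3)) * eps ^ 2)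
        with (8 * eps ^ 2 / ((u 0%nat + 1) * (u 0%nat + 3))) by (field; lra).
      exact Hh. }
    apply (Rmult_le_compat_r ((u 0%nat + 1) * (u 0%nat + 3))) in Hk; [|lra].
    replace (8 / ((u 0%nat + 1) * (u 0%nat + 3)) * ((u 0%nat + 1) * (u 0%nat + 3)))
      with 8 in Hk by (field; lra).
    exact Hk. }
  assert (Hk1 : k <= 1) by nra.
  assert (Hmid : forall n, mid_fun k ((u n + u (S n)) / 2) = 2 * u n)
    by (intros n; apply midpoint_step_mid_fun, Hstep).
  assert (Hstep_above : forall n, 1 <= u n <= u 0%nat -> 1 <= u (S n) <= u n).
  { intros n Hn. apply (step_above_one k); [exact Hk0|lra| |apply Hmid]. nra. }
  assert (Hinv : forall n, 1 <= u n <= u 0%nat).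
  { induction n as [|n IH]; [lra|]. pose proof (Hstep_above n IH). lra. }
  split; [intros n; apply Hstep_above, Hinv|].
  apply (geometric_cv u 1 (contraction k)); [apply contraction_bounds; lra|].
  intros n. destruct (Hinv n), (Hstep_above n (Hinv n)).
  rewrite !Rabs_pos_eq by lra.
  pose proof (step_toward_one _ _ _ (Hmid n)) as Htoward.
  set (m := (u n + u (S n)) / 2) in Htoward.
  apply (le_contraction _ _ (k * m * (m + 1) / 2) k); [lra|lra| |lra].
  assert (1 <= m * (m + 1) / 2) by (assert (1 <= m) by (unfold m; lra); nra).
  split; nra.
Qed.

Lemma midpoint_cv_pos (u : nat -> R) : 0 < u 0%nat -> u 0%nat <> 1 ->
  h <= hstar (u 0%nat) eps -> (forall n, midpoint_step eps h (u n) (u (S n))) ->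
  monotone_seq u /\ Un_cv u 1.
Proof.
  intros Hpos Hne1 Hh Hstep.
  unfold hstar in Hh. rewrite Rabs_pos_eq in Hh by lra.
  destruct (Rlt_dec 1 (u 0%nat)) as [Habove|Hbelow].
  - destruct (midpoint_cv_above_one u Habove) as [Hdecr Hcv]; [|exact Hstep|].
    + replace ((u 0%nat + 1) * (u 0%nat + 3)) with (u 0%nat ^ 2 + 4 * u 0%nat + 3) by ring.
      exact Hh.
    + split; [right|]; assumption.
  - destruct (midpoint_cv_below_one u) as [Hincr Hcv]; [lra|exact Hh|exact Hstep|].
    split; [left|]; assumption.
Qed.

Lemma midpoint_cv_sgn (u : nat -> R) : ~ (u 0%nat = 0 \/ u 0%nat = 1 \/ u 0%nat = -1) ->
  h <= hstar (u 0%nat) eps -> (forall n, midpoint_step eps h (u n) (u (S n))) ->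
  monotone_seq u /\ Un_cv u (sgn (u 0%nat)).
Proof.
  intros Hnfix Hh Hstep.
  destruct (Rtotal_order (u 0%nat) 0) as [Hneg|[Hzero|Hpos]]; [|tauto|].
  - rewrite <- (Ropp_involutive (u 0%nat)), sgn_opp, sgn_pos by lra.
    destruct (midpoint_cv_pos (fun n => - u n)) as [Hmono Hcv].
    + lra.
    + lra.
    + rewrite hstar_opp. exact Hh.
    + intros n. apply midpoint_step_opp, Hstep.
    + split; [apply monotone_seq_opp|apply Un_cv_opp]; assumption.
  - rewrite sgn_pos by lra. apply midpoint_cv_pos; [lra|lra|exact Hh|exact Hstep].
Qed.

End MidpointScheme.

Theorem theorem3p7 (eps u0 h : R) (u : nat -> R) :
  0 < eps < 1 -> 0 < h -> u 0%nat = u0 ->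
  (forall n : nat, midpoint_step eps h (u n) (u (S n))) ->
  ((u0 = 0 \/ u0 = 1 \/ u0 = -1) -> h <= 2 * eps ^ 2 ->
      forall n : nat, (1 <= n)%nat -> u n = sgn u0) /\
  (~ (u0 = 0 \/ u0 = 1 \/ u0 = -1) ->
      0 < hstar u0 eps /\
      (h <= hstar u0 eps -> monotone_seq u /\ Un_cv u (sgn u0))).
Proof.
  intros [Heps _] Hh Hu0 Hstep. subst u0. split.
  - intros Hfix Hh2 n _.
    rewrite sgn_equilibrium by exact Hfix.
    apply (midpoint_seq_equilibrium eps h Heps Hh);
      [apply fAC_equilibrium, Hfix|exact Hh2|exact Hstep].
  - intros Hnfix. split; [apply hstar_pos, Heps|].
    intros Hhs. apply (midpoint_cv_sgn eps h); assumption.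
Qed.
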